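(* Let $G$ be a graph, $S\subseteq V(G)$, and $C$ a connected component of $G$, and suppose we are given a proper $2$-coloring (with colors white and black) of $C$. Let $G'$ be the graph obtained from $G$ by replacing $C$ with a star (with a new center vertex) whose ray vertices (leaves) are the vertices of $C\cap S$, and then subdividing those star edges whose ray vertex is black in the $2$-coloring. Then $B_G(S)=B_{G'}(S)$.
   Context: For a graph $G$ and $S\subseteq V(G)$, $B_G(S)$ is the set of subsets $S'\subseteq S$ such that there is a bipartition of $G$ (a proper $2$-coloring) with all vertices of $S'$ in one part and all vertices of $S\setminus S'$ in the other. If $G$ is not bipartite, $B_G(S)=\emptyset$. *)

From mathcomp Require Import all_boot.
Set Implicit Arguments. Unset Strict Implicit. Unset Printing Implicit Defensive.

Section Graphs.
Variable T : finType.

(* A graph is a vertex set V : {set T} with an edge relation e : rel T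
   (symmetric, irreflexive); only edges between vertices of V count. *)

Definition proper2 (V : {set T}) (e : rel T) (c : T -> bool) : Prop :=
  forall x y, x \in V -> y \in V -> e x y -> c x != c y.

(* S' \in B_G(S): some bipartition (color classes of a proper 2-coloring c,
   parts [c = true] and [c = false]) puts S' in one part and S \ S' in
   the other. *)
Definition bipart_with (V : {set T}) (e : rel T) (S S' : {set T}) : Prop :=
  exists c : T -> bool, proper2 V e c /\
    (forall x, x \in S' -> c x = true) /\
    (forall x, x \in S :\: S' -> c x = false).

Definition ingraph (V : {set T}) (e : rel T) : rel T :=
  [rel x y | [&& x \in V, y \in V & e x y]].

Definition is_component (V : {set T}) (e : rel T) (C : {set T}) : Prop :=
  exists2 x, x \in V & C = [set y in V | connect (ingraph V e) x y].

End Graphs.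

Section Star.
Variables (T : finType) (V : {set T}) (e : rel T) (C S : {set T}) (col : T -> bool).
(* col x = true means x is black, false means white. *)

(* Vertices of G' live in T + option T: inl x is an original vertex x,
   inr None is the new star center, inr (Some s) is the subdivision vertex
   on the star edge to the black leaf s. *)
Definition star_vertices : {set T + option T} :=
  [set inl x | x in (V :\: C) :|: (C :&: S)]
  :|: [set inr None]
  :|: [set inr (Some s) | s in [set s in C :&: S | col s]].

Definition star_edge : rel (T + option T) := fun u v =>
  match u, v with
  | inl x, inl y => [&& x \in V :\: C, y \in V :\: C & e x y]
  | inl x, inr None | inr None, inl x => (x \in C :&: S) && ~~ col x
  | inl x, inr (Some s) | inr (Some s), inl x =>
      [&& x == s, s \in C :&: S & col s]
  | inr None, inr (Some s) | inr (Some s), inr None => (s \in C :&: S) && col s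
  | _, _ => false
  end.
End Star.

(* On a connected component, two proper 2-colorings either agree or are
   complementary, so on C every proper 2-coloring of G is [col] twisted by a
   single bit k.  In G' properness forces the colors of the leaves of the
   star: a white leaf is adjacent to the center and a black leaf
   is at distance two, so leaf x gets color [col x (+) k] when the center
   gets [~~ k].  As neither C nor the star has edges to the rest of the graph,
   colorings of the remaining vertices carry over unchanged in both
   directions, and the sides of S are determined by the colors of S alone. *)
From mathcomp Require Import all_boot.

Set Implicit Arguments.
Unset Strict Implicit.
Unset Printing Implicit Defensive.

Section Component.
Variables (T : finType) (V : {set T}) (e : rel T) (x0 : T).

Definition component := [set y in V | connect (ingraph V e) x0 y].

Lemma component_closed : {in component & V, forall x y, e x y -> y \in component}.
Proof.
move=> x y /setIdP[xV x0x] yV exy; rewrite inE yV.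
by apply: connect_trans x0x (connect1 _); rewrite /ingraph /= xV yV.
Qed.

Lemma component_const (rT : eqType) (f : T -> rT) :
  {in component &, forall u v, e u v -> f u = f v} ->
  {in component, forall y, f y = f x0}.
Proof.
move=> f_edge y /setIdP[_ /connectP[p]].
elim/last_ind: p y => [|p z IHp] y; first by move=> _ ->.
rewrite rcons_path last_rcons => /andP[x0p /and3P[pV zV ez]] ->.
have pC : last x0 p \in component by rewrite inE pV; apply/connectP; exists p.
by rewrite -(IHp _ x0p erefl) (f_edge _ _ pC (component_closed pC zV ez) ez).
Qed.

Lemma proper2_component_flip (c col : T -> bool) :
  proper2 component e c -> proper2 component e col ->
  {in component, forall y, c y = col y (+) (c x0 (+) col x0)}.
Proof.
move=> pc pcol y yC.
have -> : c x0 (+) col x0 = c y (+) col y.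
  apply/esym/(@component_const _ (fun x => c x (+) col x)) => // u v uC vC euv.
  move: (pc _ _ uC vC euv) (pcol _ _ uC vC euv).
  by case: (c u) (c v) (col u) (col v) => [] [] [] [].
by case: (c y) (col y) => [] [].
Qed.

End Component.

Lemma proper2_sub (T : finType) (W V : {set T}) (e : rel T) (c : T -> bool) :
  W \subset V -> proper2 V e c -> proper2 W e c.
Proof. by move=> /subsetP WV pc x y /WV xV /WV yV; apply: pc. Qed.

Lemma proper2_addb (T : finType) (V : {set T}) (e : rel T) (c : T -> bool) k :
  proper2 V e c -> proper2 V e (fun x => c x (+) k).
Proof. by move=> pc x y xV yV /(pc x y xV yV); case: (c x) (c y) k => [] [] []. Qed.

Lemma proper2_glue (T : finType) (V C : {set T}) (e : rel T) (f g : T -> bool) :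
  symmetric e -> {in C & V, forall x y, e x y -> y \in C} ->
  proper2 C e f -> proper2 (V :\: C) e g ->
  proper2 V e (fun x => if x \in C then f x else g x).
Proof.
move=> e_sym C_closed pf pg x y xV yV exy.
case xC: (x \in C); case yC: (y \in C).
- exact: pf.
- by rewrite (C_closed x y xC yV exy) in yC.
- by rewrite e_sym in exy; rewrite (C_closed y x yC xV exy) in xC.
- by apply: pg; rewrite // inE ?xC ?yC.
Qed.

Definition sides (T : finType) (S S' : {set T}) (c : T -> bool) : Prop :=
  (forall x, x \in S' -> c x = true) /\ (forall x, x \in S :\: S' -> c x = false).

Lemma eq_sides (T : finType) (S S' : {set T}) (c1 c2 : T -> bool) :
  S' \subset S -> {in S, c1 =1 c2} -> sides S S' c1 -> sides S S' c2.
Proof.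
move=> /subsetP S'S c12 [c1S' c1S]; split=> x xS.
  by rewrite -c12 ?c1S' ?S'S.
by rewrite -c12 ?c1S //; case/setDP: xS.
Qed.

Lemma sides_inl (T U : finType) (S S' : {set T}) (c : T + U -> bool) :
  sides [set inl x | x in S] [set inl x | x in S'] c <-> sides S S' (c \o inl).
Proof.
have inl_inj : injective (@inl T U) by move=> x y [].
split=> [[cS' cS] | [cS' cS]]; split.
- by move=> x xS'; apply/cS'/imset_f.
- by move=> x /setDP[xS xS']; apply: cS; rewrite !inE !mem_imset // xS xS'.
- by move=> _ /imsetP[x xS' ->]; apply: cS'.
- move=> _ /setDP[/imsetP[x xS ->]]; rewrite mem_imset // => xS'.
  by apply: cS; rewrite inE xS xS'.
Qed.

Section Star.
Variables (T : finType) (V : {set T}) (e : rel T) (C S : {set T}) (col : T -> bool).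

Notation G' := (star_vertices V C S col).
Notation e' := (star_edge V e C S col).

Definition star_color (c : T -> bool) (k : bool) (u : T + option T) : bool :=
  match u with inl x => c x | inr None => ~~ k | inr (Some _) => k end.

Lemma proper2_star_color c k :
  proper2 (V :\: C) e c -> {in C, forall x, c x = col x (+) k} ->
  proper2 G' e' (star_color c k).
Proof.
move=> pc cC [x|[s|]] [y|[t|]] _ _ //=.
- by case/and3P=> xV yV; apply: pc.
- by case/and3P=> /eqP-> /setIP[sC _] cs; rewrite cC // cs; case: (k).
- by case/andP=> /setIP[xC _] /negbTE cx; rewrite cC // cx; case: (k).
- by case/and3P=> /eqP-> /setIP[sC _] cs; rewrite cC // cs; case: (k).
- by case: (k).
- by case/andP=> /setIP[yC _] /negbTE cy; rewrite cC // cy; case: (k).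
- by case: (k).
Qed.

Lemma proper2_star_outside c' : proper2 G' e' c' -> proper2 (V :\: C) e (c' \o inl).
Proof.
have inl_G' x : x \in V :\: C -> inl x \in G'.
  by move=> xVC; rewrite !inE imset_f // inE xVC.
by move=> pc' x y xVC yVC exy; apply: pc'; rewrite ?inl_G' //= xVC yVC.
Qed.

Lemma star_leaf_color c' : proper2 G' e' c' ->
  {in C :&: S, forall x, c' (inl x) = col x (+) ~~ c' (inr None)}.
Proof.
move=> pc' x xCS.
have xG' : inl x \in G' by rewrite !inE imset_f // inE xCS orbT.
have centerG' : inr None \in G' by rewrite !inE eqxx orbT.
case cx: (col x).
- have sG' : inr (Some x) \in G' by rewrite !inE imset_f ?orbT // inE xCS.
  move: (pc' _ _ sG' xG') (pc' _ _ sG' centerG'); rewrite /= eqxx xCS cx.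
  move=> /(_ isT) + /(_ isT).
  by case: (c' (inl x)) (c' (inr None)) (c' (inr (Some x))) => [] [] [].
- move: (pc' _ _ xG' centerG'); rewrite /= xCS cx => /(_ isT).
  by case: (c' (inl x)) (c' (inr None)) => [] [].
Qed.

End Star.

Theorem lemma5p4 (T : finType) (V : {set T}) (e : rel T)
    (e_sym : symmetric e) (e_irr : irreflexive e)
    (S C : {set T}) (col : T -> bool) :
  S \subset V ->
  is_component V e C ->
  proper2 C e col ->
  forall S' : {set T}, S' \subset S ->
    (bipart_with V e S S' <->
     bipart_with (star_vertices V C S col) (star_edge V e C S col)
                 [set inl x | x in S] [set inl x | x in S']).
Proof.
move=> _ [x0 _ ->] pcol S' S'S.
have CV : component V e x0 \subset V by apply/subsetP=> x /setIdP[].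
split=> [[c [pc cS]] | [c' [pc' /sides_inl c'S]]].
- exists (star_color c (c x0 (+) col x0)); split; last exact/sides_inl.
  apply: proper2_star_color; first exact: proper2_sub (subsetDl _ _) pc.
  exact: proper2_component_flip (proper2_sub CV pc) pcol.
- exists (fun x => if x \in component V e x0 then col x (+) ~~ c' (inr None)
                   else (c' \o inl) x).
  split; last first.
    apply: eq_sides c'S => // x xS /=.
    by case: ifP => // xC; rewrite (star_leaf_color pc') // inE xC.
  apply: proper2_glue => //; first exact: component_closed.
    exact: proper2_addb.
  exact: proper2_star_outside pc'.
Qed.
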